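(* Let $\Psi$ be a root subsystem of $\Phi$, let $\Delta=(D_0,L_{\beta_1},D_1,\dots,L_{\beta_m},D_m)$ be a gallery in $\Psi$, let $i\in[0,m]$, and let $C\in\mathrm{Ch}_\Phi$ be a chamber lifting $D_i$. Then there exists a unique gallery in $\Phi$ that lifts $\Delta$ and whose $i$th chamber is $C$.
   Context: $E$ is a finite-dimensional real Euclidean space with inner product $(\cdot,\cdot)$; $\Phi\subset E$ is a finite (reduced) root system (not necessarily spanning, not necessarily crystallographic) with reflections $\omega_\alpha$ through $L_\alpha=\alpha^\perp$. A root subsystem is a nonempty $\Psi\subset\Phi$ stable under $\omega_\alpha$, $\alpha\in\Psi$. For $X\subset\Phi$, $\mathrm{Ch}_X$ is the set of connected components of $E\setminus\bigcup_{\alpha\in X}L_\alpha$. Chambers $C,D\in\mathrm{Ch}_X$ are connected through $L_\alpha$ if $\overline C\cap\overline D\cap L_\alpha$ has nonempty interior in $L_\alpha$. A gallery in $X$ (for $X=\Phi$ or a root subsystem) is a sequence $(C_0,L_{\alpha_1},C_1,\dots,L_{\alpha_n},C_n)$ with $C_j\in\mathrm{Ch}_X$, $\alpha_j\in X$, and $C_{j-1},C_j$ connected through $L_{\alpha_j}$ for all $j$; $C_j$ is its $j$th chamber and $(L_{\alpha_1},\dots,L_{\alpha_n})$ its sequence of walls. For $C\in\mathrm{Ch}_\Phi$, $\Phi^+(C)=\{\alpha\in\Phi:(e,\alpha)>0\ \forall e\in C\}$ and $\Phi^s(C)$ is the unique simple system of $\Phi$ contained in $\Phi^+(C)$; similarly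 $\Psi^s(D)$ for $D\in\mathrm{Ch}_\Psi$. A chamber $C\in\mathrm{Ch}_\Phi$ lifts $D\in\mathrm{Ch}_\Psi$ if $\Psi^s(D)\subset\Phi^s(C)$. A gallery $\Gamma$ in $\Phi$ lifts a gallery $\Delta$ in $\Psi$ if their sequences of walls coincide and, for each $j$, the $j$th chamber of $\Gamma$ lifts the $j$th chamber of $\Delta$. *)

From HB Require Import structures.
From mathcomp Require Import all_boot all_order all_algebra.
From mathcomp Require Import all_classical all_reals all_analysis.
Set Implicit Arguments. Unset Strict Implicit. Unset Printing Implicit Defensive.
Import Order.TTheory GRing.Theory Num.Theory.
Import numFieldNormedType.Exports.
Local Open Scope classical_set_scope.
Local Open Scope ring_scope.

(* The Euclidean space E is modelled as 'rV[R]_n with the standard inner product. *)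
Definition dotp (R : realType) (n : nat) (u v : 'rV[R]_n) : R := (u *m v^T) 0 0.

Definition refl (R : realType) (n : nat) (a v : 'rV[R]_n) : 'rV[R]_n :=
  v - ((2 * dotp v a) / dotp a a) *: a.

Definition hyp (R : realType) (n : nat) (a : 'rV[R]_n) : set 'rV[R]_n :=
  [set e | dotp e a = 0].

(* finite reduced (not necessarily crystallographic / spanning) root system *)
Definition root_system (R : realType) (n : nat) (Phi : seq 'rV[R]_n) : Prop :=
  [/\ forall a, a \in Phi -> a != 0,
      forall a (c : R), a \in Phi -> c *: a \in Phi -> c = 1 \/ c = -1
    & forall a b, a \in Phi -> b \in Phi -> refl a b \in Phi].

Definition root_subsystem (R : realType) (n : nat) (Phi Psi : seq 'rV[R]_n) : Prop :=
  [/\ Psi != [::], {subset Psi <= Phi}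
    & forall a b, a \in Psi -> b \in Psi -> refl a b \in Psi].

Definition hcompl (R : realType) (n : nat) (X : seq 'rV[R]_n) : set 'rV[R]_n :=
  [set e | forall a, a \in X -> dotp e a != 0].

Definition chamber (R : realType) (n : nat) (X : seq 'rV[R]_n) (C : set 'rV[R]_n) : Prop :=
  exists2 x, hcompl X x & C = connected_component (hcompl X) x.

(* closure C /\ closure D /\ L has nonempty interior in L (subspace topology) *)
Definition connected_through (R : realType) (n : nat) (C D L : set 'rV[R]_n) : Prop :=
  exists x, exists U : set 'rV[R]_n,
    [/\ open U, U x, L x & U `&` L `<=` closure C `&` closure D `&` L].

(* a gallery in X of length m: chambers Cs 0 .. Cs m, walls W 1 .. W m *)
Definition gallery (R : realType) (n : nat) (X : seq 'rV[R]_n) (m : nat)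
    (Cs : nat -> set 'rV[R]_n) (W : nat -> set 'rV[R]_n) : Prop :=
  (forall j, (j <= m)%N -> chamber X (Cs j)) /\
  (forall j, (1 <= j <= m)%N ->
     (exists2 a, a \in X & W j = hyp a) /\ connected_through (Cs j.-1) (Cs j) (W j)).

Definition simple_system (R : realType) (n : nat) (X S : seq 'rV[R]_n) : Prop :=
  [/\ {subset S <= X}, free S &
      forall a, a \in X -> exists c : 'I_(size S) -> R,
        a = \sum_(i < size S) c i *: S`_i /\
        ((forall i, 0 <= c i) \/ (forall i, c i <= 0))].

Definition pos_roots (R : realType) (n : nat) (X : seq 'rV[R]_n) (C : set 'rV[R]_n)
  : set 'rV[R]_n := [set a | a \in X /\ forall e, C e -> 0 < dotp e a].

Definition is_simple_of (R : realType) (n : nat) (X : seq 'rV[R]_n) (C : set 'rV[R]_n)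
  (S : seq 'rV[R]_n) : Prop :=
  simple_system X S /\ (forall a, a \in S -> pos_roots X C a).

Definition lifts (R : realType) (n : nat) (Phi Psi : seq 'rV[R]_n)
  (C D : set 'rV[R]_n) : Prop :=
  forall SPhi SPsi, is_simple_of Phi C SPhi -> is_simple_of Psi D SPsi ->
    {subset SPsi <= SPhi}.

Definition lifts_gallery (R : realType) (n : nat) (Phi Psi : seq 'rV[R]_n) (m : nat)
  (Cs Ds : nat -> set 'rV[R]_n) : Prop :=
  forall j, (j <= m)%N -> lifts Phi Psi (Cs j) (Ds j).

(* A chamber of Phi is the set of points at which every root has a prescribed
   sign, and its simple system is the irredundant set of generators of the cone
   of roots positive on it; distinct generators make obtuse angles, which forces
   linear independence (Humphreys).
   If C lifts D and D is joined to D' through L_b, then b or -b is simple for D,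
   hence for C, so L_b carries a facet of C: the only chambers joined to C
   through L_b are C and s_b C. Exactly one of them lifts D', the other one
   would have to be positive on b (if D' = D) or on -b (if D' = s_b D).
   Every step of the gallery thus lifts uniquely, forwards and backwards, and
   induction from the i-th chamber yields the unique lifted gallery. *)

From HB Require Import structures.
From mathcomp Require Import all_boot all_order all_algebra.
From mathcomp Require Import all_classical all_reals all_analysis.
From mathcomp Require Import ring lra.
Import Order.TTheory GRing.Theory Num.Theory.
Import numFieldNormedType.Exports.
Local Open Scope classical_set_scope.
Local Open Scope ring_scope.
Set Implicit Arguments. Unset Strict Implicit. Unset Printing Implicit Defensive.

Section InnerProduct.
Variables (R : realType) (n : nat).
Implicit Types (a u v w : 'rV[R]_n).

Lemma dotpE u v : dotp u v = \sum_j u 0 j * v 0 j.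
Proof. by rewrite /dotp !mxE; apply: eq_bigr => j _; rewrite mxE. Qed.

Lemma dotpC u v : dotp u v = dotp v u.
Proof. by rewrite !dotpE; apply: eq_bigr => j _; rewrite mulrC. Qed.

Lemma dotpDl u v w : dotp (u + v) w = dotp u w + dotp v w.
Proof. by rewrite /dotp mulmxDl mxE. Qed.

Lemma dotpZl (c : R) u w : dotp (c *: u) w = c * dotp u w.
Proof. by rewrite /dotp -scalemxAl mxE. Qed.

Lemma dotp0l w : dotp 0 w = 0.
Proof. by rewrite /dotp mul0mx mxE. Qed.

Lemma dotpNl u w : dotp (- u) w = - dotp u w.
Proof. by rewrite -scaleN1r dotpZl mulN1r. Qed.

Lemma dotpBl u v w : dotp (u - v) w = dotp u w - dotp v w.
Proof. by rewrite dotpDl dotpNl. Qed.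

Lemma dotpDr u v w : dotp w (u + v) = dotp w u + dotp w v.
Proof. by rewrite !(dotpC w) dotpDl. Qed.

Lemma dotpZr (c : R) u w : dotp w (c *: u) = c * dotp w u.
Proof. by rewrite !(dotpC w) dotpZl. Qed.

Lemma dotp0r w : dotp w 0 = 0.
Proof. by rewrite dotpC dotp0l. Qed.

Lemma dotpNr u w : dotp w (- u) = - dotp w u.
Proof. by rewrite !(dotpC w) dotpNl. Qed.

Lemma dotpBr u v w : dotp w (u - v) = dotp w u - dotp w v.
Proof. by rewrite dotpDr dotpNr. Qed.

Lemma dotp_suml (I : Type) (r : seq I) (P : pred I) (F : I -> 'rV[R]_n) w :
  dotp (\sum_(i <- r | P i) F i) w = \sum_(i <- r | P i) dotp (F i) w.
Proof. exact: (big_morph (fun u => dotp u w) (fun u v => dotpDl u v w) (dotp0l w)). Qed.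

Lemma dotp_sumr (I : Type) (r : seq I) (P : pred I) (F : I -> 'rV[R]_n) w :
  dotp w (\sum_(i <- r | P i) F i) = \sum_(i <- r | P i) dotp w (F i).
Proof. by rewrite dotpC dotp_suml; apply: eq_bigr => i _; rewrite dotpC. Qed.

Lemma dotpp_ge0 u : 0 <= dotp u u.
Proof. by rewrite dotpE; apply: sumr_ge0 => j _; rewrite -expr2 sqr_ge0. Qed.

Lemma dotpp_eq0 u : (dotp u u == 0) = (u == 0).
Proof.
apply/idP/eqP => [|->]; last by rewrite dotp0l.
rewrite dotpE psumr_eq0 => [/allP u0|j _]; last by rewrite -expr2 sqr_ge0.
apply/rowP => j; rewrite mxE.
by have := u0 j (mem_index_enum j); rewrite -expr2 sqrf_eq0 => /eqP.
Qed.

Lemma dotpp_gt0 u : u != 0 -> 0 < dotp u u.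
Proof. by rewrite lt_def dotpp_ge0 dotpp_eq0 andbT. Qed.

Lemma dotp_continuous a : continuous (fun z : 'rV[R]_n => dotp z a).
Proof.
have -> : (fun z : 'rV[R]_n => dotp z a) =
    (fun z => \sum_(j <- index_enum 'I_n) z 0 j * a 0 j).
  by apply/funext => z; rewrite dotpE.
elim: (index_enum _) => [|j r IH] z.
  by under eq_fun do rewrite big_nil; exact: cst_continuous.
under eq_fun do rewrite big_cons.
apply: continuousD (IH z).
by apply: cvgMr_tmp; [exact: nbhs_filter|exact: coord_continuous].
Qed.

End InnerProduct.

Section Reflections.
Variables (R : realType) (n : nat).
Implicit Types (u v w a b : 'rV[R]_n).

Fact refl_is_linear a : linear (refl a).
Proof.
move=> c u v; rewrite /refl dotpDl dotpZl mulrDr mulrDl scalerDl scalerBr scalerA.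
by rewrite mulrCA !mulrA opprD addrACA.
Qed.

HB.instance Definition _ a := GRing.isLinear.Build R _ _ _ (refl a) (refl_is_linear a).

(* Rewriting with [raddfN] would leave the additive structure, not [refl], as head symbol. *)
Lemma reflN a v : refl a (- v) = - refl a v.
Proof. exact: raddfN. Qed.

Lemma dotp_refl_root a v : a != 0 -> dotp (refl a v) a = - dotp v a.
Proof.
by move=> /dotpp_gt0/lt0r_neq0 aa0; rewrite /refl dotpBl dotpZl; field.
Qed.

Lemma reflK a : a != 0 -> cancel (refl a) (refl a).
Proof.
move=> a0 v; rewrite {1}/refl dotp_refl_root // /refl.
by rewrite mulrN mulNr scaleNr opprK subrK.
Qed.

Lemma refl_inj a : a != 0 -> injective (refl a).
Proof. by move/reflK/can_inj. Qed.

Lemma dotp_refl a u v : a != 0 -> dotp (refl a u) (refl a v) = dotp u v.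
Proof.
move=> /dotpp_gt0/lt0r_neq0 aa0.
by rewrite /refl dotpBl !dotpBr !dotpZl !dotpZr (dotpC a v); field.
Qed.

Lemma dotp_refl_adj a u v : a != 0 -> dotp (refl a u) v = dotp u (refl a v).
Proof. by move=> a0; rewrite -{1}(reflK a0 v) dotp_refl. Qed.

Lemma refl_perp a v : dotp v a = 0 -> refl a v = v.
Proof. by move=> va; rewrite /refl va mulr0 mul0r scale0r subr0. Qed.

Lemma refl_root a : a != 0 -> refl a a = - a.
Proof.
move=> /dotpp_gt0/lt0r_neq0 aa0.
by rewrite /refl mulfK // scaler_nat mulr2n opprD addNKr.
Qed.

Lemma hypN a : hyp (- a) = hyp a.
Proof.
apply/seteqP; split => z; rewrite /hyp /= dotpNr; first by move/eqP; rewrite oppr_eq0 => /eqP.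
by move=> ->; rewrite oppr0.
Qed.

End Reflections.

Section RootSystems.
Variables (R : realType) (n : nat) (X : seq 'rV[R]_n).
Hypothesis rsX : root_system X.
Implicit Types (a b : 'rV[R]_n).

Lemma root_neq0 a : a \in X -> a != 0.
Proof. by case: rsX => h _ _; exact: h. Qed.

Lemma root_refl a b : a \in X -> b \in X -> refl a b \in X.
Proof. by case: rsX => _ _ h; exact: h. Qed.

Lemma root_opp a : a \in X -> - a \in X.
Proof. by move=> aX; rewrite -refl_root ?root_neq0 //; exact: root_refl. Qed.

Lemma root_reduced a (c : R) : a \in X -> c *: a \in X -> c = 1 \/ c = -1.
Proof. by case: rsX => _ h _; exact: h. Qed.

Lemma root_orth_proj_neq0 a b : a \in X -> b \in X -> b != a -> b != - a ->
  b - (dotp b a / dotp a a) *: a != 0.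
Proof.
move=> aX bX ba bNa; rewrite subr_eq0; apply/eqP => e.
have cX : (dotp b a / dotp a a) *: a \in X by rewrite -e.
by case: (root_reduced aX cX) => c1; [move: ba|move: bNa];
  rewrite e c1 ?scale1r ?scaleN1r eqxx.
Qed.

End RootSystems.

Lemma subsystem_root_system (R : realType) n (Phi Psi : seq 'rV[R]_n) :
  root_system Phi -> root_subsystem Phi Psi -> root_system Psi.
Proof.
move=> [h1 h2 _] [_ sub h3]; split => //.
- by move=> a /sub; exact: h1.
- by move=> a c /sub aP /sub; exact: h2.
Qed.

Lemma filter_all_seq T (I : eqType) (s : seq I) (P : I -> set T) (F : set_system T) :
  Filter F -> (forall i, i \in s -> F (P i)) -> F [set t | forall i, i \in s -> P i t].
Proof.
move=> FF; elim: s => [_|i s IH Fs]; first exact: filterE.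
have FPi : F (P i) by apply: Fs; exact: mem_head.
have FPs : F [set t | forall j, j \in s -> P j t].
  by apply: IH => j js; apply: Fs; rewrite inE js orbT.
apply: (filterS2 _ _ FPi FPs) => t Pit Pst j.
by rewrite inE => /predU1P[->|/Pst].
Qed.

Section Topology.
Variables (R : realType) (n : nat).
Implicit Types (a b g x y z : 'rV[R]_n) (A C U : set 'rV[R]_n) (S : seq 'rV[R]_n).

Lemma open_dotp_gt0 a : open [set z | 0 < dotp z a].
Proof.
apply: (open_comp (f := fun z => dotp z a) (D := [set r | 0 < r])) => [z _|];
  [exact: dotp_continuous|exact: open_gt].
Qed.

Lemma closed_dotp_ge0 a : closed [set z | 0 <= dotp z a].
Proof.
apply: (preimage_closed (f := fun z => dotp z a) (D := [set r | 0 <= r])) => [z _|];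
  [exact: dotp_continuous|exact: closed_ge].
Qed.

Lemma closure_dotp_ge0 a C y :
  (forall z, C z -> 0 < dotp z a) -> closure C y -> 0 <= dotp y a.
Proof.
move=> Ca Cy; have : closure [set z | 0 <= dotp z a] y.
  by apply: (closureS _ Cy) => z /Ca /ltW.
by rewrite -(closure_id _).1 //; exact: closed_dotp_ge0.
Qed.

Lemma separated_dotp_sign a : separated [set z | 0 < dotp z a] [set z | dotp z a < 0].
Proof.
split; apply/seteqP; split => // z [].
- by move=> /(closure_dotp_ge0 (fun _ => id)) /= za; rewrite ltNge za.
- move=> /= za /(closure_dotp_ge0 (a := - a)) za'.
  have /za' : forall w, dotp w a < 0 -> 0 < dotp w (- a) by move=> w; rewrite dotpNr oppr_gt0.
  by rewrite dotpNr oppr_ge0 leNgt za.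
Qed.

Lemma connected_sg_dotp A a x z : connected A -> (forall w, A w -> dotp w a != 0) ->
  A x -> A z -> Num.sg (dotp z a) = Num.sg (dotp x a).
Proof.
move=> cA Aa Ax Az.
have A_pm : A `<=` [set w | 0 < dotp w a] `|` [set w | dotp w a < 0].
  by move=> w /Aa; case: ltgtP => // wa _; [right|left].
case: (connected_subset (separated_dotp_sign a) A_pm cA) => /[dup] /(_ _ Ax) xa /(_ _ Az) za.
  by rewrite !gtr0_sg.
by rewrite !ltr0_sg.
Qed.

Lemma open_dotp_neq0 a : open [set z | dotp z a != 0].
Proof.
have -> : [set z | dotp z a != 0] = [set z | 0 < dotp z a] `|` [set z | 0 < dotp z (- a)].
  apply/seteqP; split => z /=; rewrite dotpNr oppr_gt0.
    by case: (ltgtP (dotp z a) 0) => // za _; [right|left].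
  by case=> za; [rewrite gt_eqF|rewrite lt_eqF].
by apply: openU; exact: open_dotp_gt0.
Qed.

Lemma open_dotp_gt0_seq S : open [set z | forall s, s \in S -> 0 < dotp z s].
Proof.
rewrite openE => z zS; apply: filter_all_seq => s sS.
by apply: open_nbhs_nbhs; split; [exact: open_dotp_gt0|exact: zS].
Qed.

Lemma line_continuous z g : continuous (fun t : R => z + t *: g).
Proof.
move=> t; apply: (@continuousD _ _ R (fun=> z) (fun t => t *: g)).
  exact: cst_continuous.
by apply: continuousZr_tmp; exact: cvg_id.
Qed.

Lemma refl_continuous b : continuous (refl b).
Proof.
move=> v; have coef_cont : {for v, continuous (fun v => 2 * dotp v b / dotp b b)}.
  apply: cvgMr_tmp; first exact: nbhs_filter.
  by apply: cvgMl_tmp; [exact: nbhs_filter|exact: dotp_continuous].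
have id_cont : {for v, continuous (fun v : 'rV[R]_n => v)} by exact: cvg_id.
exact: (continuousB id_cont (continuousZr_tmp coef_cont)).
Qed.

Lemma nbhs_line_gt0 z g U : nbhs z U -> exists t : R, [/\ 0 < t, t <= 1 & U (z + t *: g)].
Proof.
move=> Uz; have : nbhs (0 : R) ((fun t => z + t *: g) @^-1` U).
  by apply: line_continuous; rewrite scale0r addr0.
move=> /nbhs_ballP [r r0 rU]; exists (Num.min (r / 2) 1); split.
- by rewrite lt_min ltr01 divr_gt0.
- by rewrite ge_min lexx orbT.
apply: rU; rewrite -ball_normE /ball_ /= sub0r normrN gtr0_norm ?lt_min ?ltr01 ?divr_gt0 //.
by rewrite gt_min ltr_pdivrMr // ltr_pMr // ltr1n.
Qed.

Lemma closure_segment C x z :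
  (forall t : R, 0 < t <= 1 -> C (z + t *: (x - z))) -> closure C z.
Proof.
move=> Cseg B /(nbhs_line_gt0 (x - z)) [t [t0 t1 Bt]].
by exists (z + t *: (x - z)); split => //; apply: Cseg; rewrite t0.
Qed.

Lemma closure_preimage_involution (f : 'rV[R]_n -> 'rV[R]_n) C z :
  continuous f -> involutive f -> f z = z -> closure C z -> closure (f @^-1` C) z.
Proof.
move=> f_cont fK fz Cz B Bz.
have : nbhs z (f @^-1` B) by apply: f_cont; rewrite fz.
by move=> /Cz [w [Cw Bfw]]; exists (f w); split => //; rewrite /preimage /= fK.
Qed.

End Topology.

Section SignCells.
Variables (R : realType) (n : nat) (X : seq 'rV[R]_n).
Implicit Types (a b x y z : 'rV[R]_n) (C : set 'rV[R]_n).

Definition sign_cell x : set 'rV[R]_n :=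
  [set z | forall a, a \in X -> Num.sg (dotp z a) = Num.sg (dotp x a)].

Lemma sign_cell_id x : sign_cell x x.
Proof. by []. Qed.

Lemma sign_cell_eq x x' : sign_cell x x' -> sign_cell x' = sign_cell x.
Proof. by move=> xx'; apply/seteqP; split => z zx a aX; rewrite zx // xx'. Qed.

Lemma sign_cell_gt0 x z a : a \in X -> 0 < dotp x a -> sign_cell x z -> 0 < dotp z a.
Proof. by move=> aX xa /(_ a aX); rewrite (gtr0_sg xa) => /eqP; rewrite sgr_cp0. Qed.

Lemma sign_cell_lt0 x z a : a \in X -> dotp x a < 0 -> sign_cell x z -> dotp z a < 0.
Proof. by move=> aX xa /(_ a aX); rewrite (ltr0_sg xa) => /eqP; rewrite sgr_cp0. Qed.

Lemma component_hcompl x : hcompl X x -> connected_component (hcompl X) x = sign_cell x.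
Proof.
move=> hx; apply/seteqP; split => z.
  move=> zx a aX; apply: (connected_sg_dotp (@component_connected _ (hcompl X) x)) => //.
    by move=> w /connected_component_sub; apply.
  exact: connected_component_refl.
move=> zx; pose g t := x + t *: (z - x).
have seg_hcompl : g @` `[0, 1] `<=` hcompl X.
  move=> _ [t /= + <-] a aX; rewrite in_itv /= => /andP[t0 t1].
  have -> : dotp (g t) a = (1 - t) * dotp x a + t * dotp z a.
    by rewrite /g dotpDl dotpZl dotpBl; ring.
  have := zx a aX; have := hx a aX; case: (ltgtP (dotp x a) 0) => // xa _.
    by rewrite (ltr0_sg xa) => /eqP; rewrite sgr_cp0 => za; rewrite lt_eqF //; nra.
  by rewrite (gtr0_sg xa) => /eqP; rewrite sgr_cp0 => za; rewrite gt_eqF //; nra.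
have seg_conn : connected (g @` `[0, 1]).
  apply: connected_continuous_connected; first exact: segment_connected.
  exact/continuous_subspaceT/line_continuous.
have seg_x : (g @` `[0, 1]) x.
  by exists 0; [rewrite /= in_itv /= lexx ler01|rewrite /g scale0r addr0].
have seg_z : (g @` `[0, 1]) z.
  by exists 1; [rewrite /= in_itv /= lexx ler01|rewrite /g scale1r addrC subrK].
exact (connected_component_max seg_x seg_hcompl seg_conn seg_z).
Qed.

Lemma chamberP C : chamber X C -> exists2 x, hcompl X x & C = sign_cell x.
Proof. by case=> x hx ->; exists x; rewrite ?component_hcompl. Qed.

Lemma chamber_sign_cell x : hcompl X x -> chamber X (sign_cell x).
Proof. by move=> hx; exists x; rewrite ?component_hcompl. Qed.

Lemma closure_sign_cell_sg x y a : hcompl X x -> a \in X ->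
  closure (sign_cell x) y -> dotp y a != 0 -> Num.sg (dotp y a) = Num.sg (dotp x a).
Proof.
move=> hx aX cy ya; have := hx a aX; case: (ltgtP (dotp x a) 0) => // xa _.
  have : 0 <= dotp y (- a).
    by apply: closure_dotp_ge0 cy => z /(sign_cell_lt0 aX xa); rewrite dotpNr oppr_gt0.
  rewrite dotpNr oppr_ge0 le_eqVlt (negbTE ya) /= => y_lt0.
  by rewrite !ltr0_sg.
have := closure_dotp_ge0 (fun z => sign_cell_gt0 aX xa) cy.
by rewrite le_eqVlt eq_sym (negbTE ya) /= => y_gt0; rewrite !gtr0_sg.
Qed.

Hypothesis rsX : root_system X.

Lemma hcompl_refl b x : b \in X -> hcompl X x -> hcompl X (refl b x).
Proof.
by move=> bX hx a aX; rewrite dotp_refl_adj ?(root_neq0 rsX bX) // hx ?root_refl.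
Qed.

Lemma refl_sign_cell b x : b \in X -> refl b @^-1` sign_cell x = sign_cell (refl b x).
Proof.
move=> bX; have b0 := root_neq0 rsX bX.
apply/seteqP; split => z zx a aX /=.
  by rewrite -(dotp_refl z a b0) zx ?root_refl // dotp_refl_adj.
by rewrite dotp_refl_adj // zx ?root_refl // dotp_refl.
Qed.

Lemma chamber_refl b C : b \in X -> chamber X C -> chamber X (refl b @^-1` C).
Proof.
move=> bX /chamberP [x hx ->]; rewrite refl_sign_cell //.
by apply: chamber_sign_cell; exact: hcompl_refl.
Qed.

End SignCells.

Lemma preimage_reflK (R : realType) n (b : 'rV[R]_n) (C : set 'rV[R]_n) :
  b != 0 -> refl b @^-1` (refl b @^-1` C) = C.
Proof. by move=> b0; apply/seteqP; split => z; rewrite /preimage /= reflK. Qed.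

Lemma free_seqP (R : fieldType) (vT : vectType R) (S : seq vT) :
  free S <-> (forall k : 'I_(size S) -> R,
                \sum_(i < size S) k i *: S`_i = 0 -> forall i, k i = 0).
Proof. by split => [/(@freeP _ _ _ (in_tuple S))|/(@freeP _ _ _ (in_tuple S))]. Qed.

Section ReflectedSimpleSystems.
Variables (R : realType) (n : nat) (X : seq 'rV[R]_n).
Hypothesis rsX : root_system X.
Variables (b : 'rV[R]_n) (bX : b \in X).

Lemma simple_system_refl (C : set 'rV[R]_n) S :
  is_simple_of X (refl b @^-1` C) S -> is_simple_of X C (map (refl b) S).
Proof.
have b0 := root_neq0 rsX bX.
have nth_refl i : (map (refl b) S)`_i = refl b S`_i.
  case: (ltnP i (size S)) => iS; first by rewrite (nth_map 0).
  by rewrite !nth_default ?size_map ?linear0.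
move=> [[sub fr sp] pos]; split; first split.
- by move=> _ /mapP [a aS ->]; apply: root_refl => //; exact: sub.
- apply/free_seqP; rewrite size_map => k.
  under eq_bigr do rewrite nth_refl -linearZ.
  rewrite -linear_sum => /(congr1 (refl b)); rewrite reflK // linear0.
  exact: (iffLR (free_seqP S) fr k).
- move=> a aX; have [c [e sg]] := sp _ (root_refl rsX bX aX).
  rewrite size_map; exists c; split => //.
  rewrite -(reflK b0 a) e linear_sum; apply: eq_bigr => i _.
  by rewrite linearZ nth_refl.
- move=> _ /mapP [a aS ->]; have [aX pa] := pos _ aS; split; first exact: root_refl.
  by move=> e Ce; rewrite -dotp_refl_adj //; apply: pa; rewrite /preimage /= reflK.
Qed.

End ReflectedSimpleSystems.

Lemma lifts_refl (R : realType) n (Phi Psi : seq 'rV[R]_n) b C D :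
  root_system Phi -> root_subsystem Phi Psi -> b \in Psi ->
  lifts Phi Psi C D -> lifts Phi Psi (refl b @^-1` C) (refl b @^-1` D).
Proof.
move=> rs rss bPsi CD SPhi SPsi hPhi hPsi a aS.
have [_ subP _] := rss; have b0 := root_neq0 rs (subP _ bPsi).
have := CD _ _ (simple_system_refl rs (subP _ bPsi) hPhi)
  (simple_system_refl (subsystem_root_system rs rss) bPsi hPsi) (refl b a).
by rewrite map_f // => /(_ isT) /mapP [c cS /(refl_inj b0) ->].
Qed.

Section Cones.
Variables (R : realType) (n : nat).
Implicit Types (S T : seq 'rV[R]_n) (u v w x : 'rV[R]_n).

Definition cone S v :=
  exists c : 'rV[R]_n -> R, (forall s, 0 <= c s) /\ v = \sum_(s <- S) c s *: s.

Lemma sum_scale_pred1 T u (k : R) : uniq T -> u \in T ->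
  \sum_(s <- T) (if s == u then k else 0) *: s = k *: u.
Proof.
move=> uT uin; rewrite (big_rem u uin) /= eqxx big1_seq ?addr0 // => s /andP[_ sT].
have : s != u by move: sT; rewrite (mem_rem_uniq _ uT) => /andP[].
by move=> /negbTE ->; rewrite scale0r.
Qed.

Lemma cone_mem S u : uniq S -> u \in S -> cone S u.
Proof.
move=> uS uin; exists (fun s => if s == u then 1 else 0); split.
  by move=> s; case: ifP.
by rewrite sum_scale_pred1 // scale1r.
Qed.

Lemma coneZ S v (t : R) : 0 <= t -> cone S v -> cone S (t *: v).
Proof.
move=> t0 [c [c0 ->]]; exists (fun s => t * c s); split; first by move=> s; exact: mulr_ge0.
by rewrite scaler_sumr; apply: eq_bigr => s _; rewrite scalerA.
Qed.

Lemma cone_rem S b v : b \in S -> cone (rem b S) b -> cone S v -> cone (rem b S) v.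
Proof.
move=> bS [d [d0 eb]] [c [c0 ev]].
exists (fun s => c s + c b * d s); split.
  by move=> s; apply: addr_ge0 => //; exact: mulr_ge0.
have cbb : c b *: b = \sum_(s <- rem b S) (c b * d s) *: s.
  by rewrite {2}eb scaler_sumr; apply: eq_bigr => s _; rewrite scalerA.
rewrite ev (big_rem b bS) /= cbb addrC -big_split.
by apply: eq_bigr => s _; rewrite scalerDl.
Qed.

Definition irredundant S := forall b, b \in S -> ~ cone (rem b S) b.

Lemma exists_irredundant_subseq S :
  exists S', [/\ subseq S' S, forall v, cone S v -> cone S' v & irredundant S'].
Proof.
elim: {S}(size S) {-2}S (leqnn (size S)) => [|k IH] S Sk.
  by exists S; split => // b; move: Sk; rewrite leqn0 => /eqP/size0nil ->.
have [[b bS bcone]|] := pselect (exists2 b, b \in S & cone (rem b S) b); last first.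
  by move=> irr; exists S; split => // b bS bcone; apply: irr; exists b.
have [|S' [S'sub S'cone S'irr]] := IH (rem b S).
  by rewrite size_rem //; case: (size S) Sk.
exists S'; split => //; first exact: subseq_trans S'sub (rem_subseq _ _).
by move=> v /(cone_rem bS bcone) /S'cone.
Qed.

Lemma positive_comb_eq0 x S (c : 'I_(size S) -> R) :
  {in S, forall s, 0 < dotp x s} -> (forall i, 0 <= c i) ->
  \sum_i c i *: S`_i = 0 -> forall i, c i = 0.
Proof.
move=> xS c0 /(congr1 (dotp x)); rewrite dotp0r dotp_sumr => sum0 i.
have terms_ge0 j : 0 <= dotp x (c j *: S`_j).
  by rewrite dotpZr mulr_ge0 // ltW // xS // mem_nth.
have /(_ i isT) := psumr_eq0P (fun j _ => terms_ge0 j) sum0.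
by rewrite dotpZr => /eqP; rewrite mulf_eq0 => /orP[/eqP //|]; rewrite gt_eqF // xS // mem_nth.
Qed.

Lemma free_obtuse x S : uniq S -> {in S, forall s, 0 < dotp x s} ->
  {in S &, forall u w, u != w -> dotp u w <= 0} -> free S.
Proof.
move=> uS xS obt; apply/free_seqP => k k0.
(* With kp, kn the positive and negative parts of k: p = q and (p, q) <= 0 by
   obtuseness, so p = q = 0. *)
pose kp i := Num.max (k i) 0; pose kn i := Num.max (- k i) 0.
have kp_ge0 i : 0 <= kp i by rewrite le_max lexx orbT.
have kn_ge0 i : 0 <= kn i by rewrite le_max lexx orbT.
have kpn i : kp i - kn i = k i /\ kp i * kn i = 0.
  rewrite /kp /kn; case: (lerP 0 (k i)) => ki.
    by rewrite max_r ?subr0 ?mulr0 // oppr_le0.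
  by rewrite max_l ?sub0r ?mul0r ?opprK // oppr_ge0 ltW.
pose p := \sum_i kp i *: S`_i; pose q := \sum_i kn i *: S`_i.
have pq : p = q.
  apply/eqP; rewrite -subr_eq0 /p /q -sumrB; apply/eqP; rewrite -[RHS]k0.
  apply: eq_bigr => i _.
  by rewrite -scalerBl (kpn i).1.
have pp_le0 : dotp p p <= 0.
  rewrite {2}pq dotp_suml; apply: sumr_le0 => i _; rewrite dotp_sumr.
  apply: sumr_le0 => j _; rewrite dotpZl dotpZr mulrA.
  have [<-|ij] := eqVneq i j; first by rewrite (kpn i).2 mul0r.
  rewrite mulr_ge0_le0 ?mulr_ge0 // obt ?mem_nth //.
  by rewrite nth_uniq.
have p0 : p = 0 by apply/eqP; rewrite -dotpp_eq0 eq_le pp_le0 dotpp_ge0.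
have q0 : q = 0 by rewrite -pq.
move=> i; rewrite -(kpn i).1 (positive_comb_eq0 xS kp_ge0 p0).
by rewrite (positive_comb_eq0 xS kn_ge0 q0) subr0.
Qed.

Lemma irredundant_not_cone_subZ x S u w (k : R) : uniq S ->
  {in S, forall s, 0 < dotp x s} -> irredundant S ->
  u \in S -> w \in S -> u != w -> 0 < k -> ~ cone S (w - k *: u).
Proof.
(* If the coefficient of w is below 1, w is in the cone of the other generators;
   otherwise pairing with x gives a contradiction. *)
move=> uS xS irr uin win uw k0 [d [d0 e]].
set T := rem w S.
have uT : u \in T by rewrite /T (mem_rem_uniq _ uS) inE uw uin.
have e2 : w - k *: u = d w *: w + \sum_(s <- T) d s *: s by rewrite e (big_rem w win).
have [dw1|dw1] := ltP (d w) 1.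
  apply: (irr w win); exists (fun s => (d s + (if s == u then k else 0)) / (1 - d w)).
  split=> [s|].
    rewrite divr_ge0 ?subr_ge0 ?(ltW dw1) // addr_ge0 //.
    by case: ifP => // _; exact: ltW.
  have e3 : (1 - d w) *: w = \sum_(s <- T) (d s + (if s == u then k else 0)) *: s.
    under eq_bigr do rewrite scalerDl.
    rewrite big_split /= sum_scale_pred1 ?rem_uniq //.
    have -> : \sum_(s <- T) d s *: s = w - k *: u - d w *: w by rewrite e2 addrAC subrr add0r.
    by rewrite scalerBl scale1r addrAC subrK.
  have dw1' : 1 - d w != 0 by rewrite subr_eq0 eq_sym lt_eqF.
  rewrite -[LHS]scale1r -[in LHS](mulVf dw1') -scalerA e3 scaler_sumr.
  by apply: eq_bigr => s _; rewrite scalerA mulrC.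
have := congr1 (dotp x) e2; rewrite dotpBr dotpZr dotpDr dotpZr dotp_sumr.
have xw := xS _ win; have xu := xS _ uin.
have : 0 <= \sum_(s <- T) dotp x (d s *: s).
  rewrite big_seq; apply: sumr_ge0 => s sT.
  by rewrite dotpZr mulr_ge0 // ltW // xS // (mem_rem sT).
nra.
Qed.

End Cones.

Section SimpleSystems.
Variables (R : realType) (n : nat) (X : seq 'rV[R]_n).
Hypothesis rsX : root_system X.
Variables (x : 'rV[R]_n) (hx : hcompl X x).
Implicit Types (S : seq 'rV[R]_n) (a u w : 'rV[R]_n).

Definition minimal_generators S :=
  [/\ uniq S, {subset S <= X}, {in S, forall s, 0 < dotp x s},
      forall a, a \in X -> 0 < dotp x a -> cone S a & irredundant S].

Lemma minimal_generators_obtuse S : minimal_generators S ->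
  {in S &, forall u w, u != w -> dotp u w <= 0}.
Proof.
(* Otherwise s_u w = w - c u with c > 0 is a root, and it or its opposite,
   being positive on x, would contradict irredundancy. *)
move=> [uS SX xS gen irr] u w uin win uw; rewrite leNgt; apply/negP => uw_gt0.
have u0 := root_neq0 rsX (SX _ uin).
pose c := 2 * dotp w u / dotp u u.
have c_gt0 : 0 < c by rewrite divr_gt0 ?dotpp_gt0 // mulr_gt0 // dotpC.
have rX : w - c *: u \in X by exact: (root_refl rsX (SX _ uin) (SX _ win)).
have [r_lt0|r_gt0] : dotp x (w - c *: u) < 0 \/ 0 < dotp x (w - c *: u).
  by move: (hx rX); case: ltgtP => // _ _; [left|right].
- have : 0 < dotp x (- (w - c *: u)) by rewrite dotpNr oppr_gt0.
  have cV_ge0 : 0 <= c^-1 by rewrite invr_ge0 ltW.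
  move=> /(gen _ (root_opp rsX rX)) /(coneZ cV_ge0).
  rewrite opprB scalerBr scalerA mulVf ?gt_eqF // scale1r.
  apply: (irredundant_not_cone_subZ uS xS irr win uin); first by rewrite eq_sym.
  by rewrite invr_gt0.
- exact: irredundant_not_cone_subZ uS xS irr uin win uw c_gt0 (gen _ rX r_gt0).
Qed.

Lemma exists_simple_system :
  exists S, is_simple_of X (sign_cell X x) S /\ minimal_generators S.
Proof.
pose P := [seq a <- undup X | 0 < dotp x a].
have memP a : (a \in P) = (0 < dotp x a) && (a \in X) by rewrite mem_filter mem_undup.
have [S [SP Pcone Sirr]] := exists_irredundant_subseq P.
have SX : {subset S <= X} by move=> s /(mem_subseq SP); rewrite memP => /andP[].
have xS : {in S, forall s, 0 < dotp x s} by move=> s /(mem_subseq SP); rewrite memP => /andP[].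
have gen a : a \in X -> 0 < dotp x a -> cone S a.
  move=> aX xa; apply/Pcone/cone_mem; first by rewrite filter_uniq ?undup_uniq.
  by rewrite memP xa.
have uS : uniq S by apply: subseq_uniq SP _; rewrite filter_uniq ?undup_uniq.
have minS : minimal_generators S by [].
exists S; split => //; split; first split => //.
- exact: free_obtuse uS xS (minimal_generators_obtuse minS).
- move=> a aX; have := hx aX; case: (ltgtP (dotp x a) 0) => // xa _.
    have : 0 < dotp x (- a) by rewrite dotpNr oppr_gt0.
    move=> /(gen _ (root_opp rsX aX)) [c [c0 /(canRL (@opprK _)) ->]].
    exists (fun i => - c S`_i); split; last by right => i; rewrite oppr_le0.
    rewrite (big_nth 0) big_mkord -sumrN; apply: eq_bigr => i _.
    by rewrite scaleNr.
  have [c [c0 ->]] := gen _ aX xa.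
  by exists (fun i => c S`_i); split; [rewrite (big_nth 0) big_mkord|left].
- move=> a aS; split; first exact: SX.
  by move=> z; apply: sign_cell_gt0; [exact: SX|exact: xS].
Qed.

End SimpleSystems.

Section GenericWallPoints.
Variables (R : realType) (n : nat).
Implicit Types (a b y : 'rV[R]_n) (U : set 'rV[R]_n) (A : seq 'rV[R]_n).

Lemma exists_wall_point_off b a y0 U : b != 0 -> a - (dotp a b / dotp b b) *: b != 0 ->
  open U -> U y0 -> dotp y0 b = 0 -> exists y, [/\ U y, dotp y b = 0 & dotp y a != 0].
Proof.
move=> /dotpp_gt0/lt0r_neq0 bb0 a'0 oU Uy0 y0b.
have [y0a|] := eqVneq (dotp y0 a) 0; last by exists y0.
(* Move from y0 along the component a' of a orthogonal to b. *)
set a' := a - _ *: b in a'0.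
have a'b : dotp a' b = 0 by rewrite /a' dotpBl dotpZl; field.
have a'a : dotp a' a = dotp a' a' by rewrite {2}/a' dotpBr dotpZr a'b mulr0 subr0.
have [t [t0 _ Ut]] := nbhs_line_gt0 a' (open_nbhs_nbhs (conj oU Uy0)).
exists (y0 + t *: a'); split => //; first by rewrite dotpDl y0b dotpZl a'b mulr0 addr0.
by rewrite dotpDl y0a dotpZl a'a add0r mulf_neq0 ?gt_eqF ?dotpp_gt0.
Qed.

Lemma exists_generic_wall_point b A y0 U : b != 0 ->
  {in A, forall a, a - (dotp a b / dotp b b) *: b != 0} ->
  open U -> U y0 -> dotp y0 b = 0 ->
  exists y, [/\ U y, dotp y b = 0 & {in A, forall a, dotp y a != 0}].
Proof.
move=> b0; elim: A y0 U => [|a A IH] y0 U offA oU Uy0 y0b; first by exists y0.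
have [y1 [Uy1 y1b y1a]] := exists_wall_point_off b0 (offA a (mem_head _ _)) oU Uy0 y0b.
have oUa : open (U `&` [set z | dotp z a != 0]) by apply: openI => //; exact: open_dotp_neq0.
have [|y [[Uy ya] yb yA]] := IH y1 _ _ oUa (conj Uy1 y1a) y1b.
  by move=> c cA; apply: offA; rewrite inE cA orbT.
by exists y; split => // c; rewrite inE => /predU1P[->|/yA].
Qed.

End GenericWallPoints.

Lemma connected_through_sym (R : realType) n (C D L : set 'rV[R]_n) :
  connected_through C D L -> connected_through D C L.
Proof. by move=> [x [U [oU Ux Lx sub]]]; exists x, U; split => // z /sub [[]]. Qed.

Lemma connected_through_same (R : realType) n (C D L : set 'rV[R]_n) :
  connected_through C D L -> connected_through C C L.
Proof. by move=> [x [U [oU Ux Lx sub]]]; exists x, U; split => // z /sub [[]]. Qed.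

Lemma connected_through_generic (R : realType) n (X : seq 'rV[R]_n) b C C' :
  root_system X -> b \in X -> connected_through C C' (hyp b) ->
  exists y, [/\ closure C y, closure C' y, dotp y b = 0 &
    forall a, a \in X -> a != b -> a != - b -> dotp y a != 0].
Proof.
move=> rsX bX [y0 [U [oU Uy0 y0b UL]]].
pose A := [seq a <- X | (a != b) && (a != - b)].
have offA : {in A, forall a, a - (dotp a b / dotp b b) *: b != 0}.
  move=> a; rewrite mem_filter => /andP[/andP[ab aNb] aX].
  exact (root_orth_proj_neq0 rsX bX aX ab aNb).
have [y [Uy yb yA]] := exists_generic_wall_point (root_neq0 rsX bX) offA oU Uy0 y0b.
have [[Cy C'y] _] := UL y (conj Uy yb).
by exists y; split => // a aX ab aNb; apply: yA; rewrite mem_filter ab aNb.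
Qed.

Lemma sgr_opp_neq (R : realDomainType) (p q : R) : p != 0 -> q != 0 ->
  Num.sg p != Num.sg q -> Num.sg p = Num.sg (- q).
Proof.
rewrite sgrN; case: (ltgtP p 0) => // p0 _; case: (ltgtP q 0) => // q0 _;
  by rewrite ?(gtr0_sg p0) ?(ltr0_sg p0) ?(gtr0_sg q0) ?(ltr0_sg q0) ?eqxx ?opprK.
Qed.

Section Walls.
Variables (R : realType) (n : nat) (X : seq 'rV[R]_n).
Hypothesis rsX : root_system X.
Variables (x : 'rV[R]_n) (hx : hcompl X x).
Implicit Types (S : seq 'rV[R]_n) (a b g y z : 'rV[R]_n).

Lemma simple_comb_ge0 S a : is_simple_of X (sign_cell X x) S -> a \in X -> 0 < dotp x a ->
  exists c : 'I_(size S) -> R, a = \sum_i c i *: S`_i /\ forall i, 0 <= c i.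
Proof.
move=> [[_ _ comb] pos] aX xa; have [c [ac [c_ge0|c_le0]]] := comb a aX.
  by exists c.
suff : dotp x a <= 0 by rewrite leNgt xa.
rewrite ac dotp_sumr; apply: sumr_le0 => i _; rewrite dotpZr mulr_le0_ge0 // ltW //.
by apply: (proj2 (pos _ (mem_nth 0 (ltn_ord i)))).
Qed.

Lemma wall_simple_root S C' b : b \in X -> connected_through (sign_cell X x) C' (hyp b) ->
  is_simple_of X (sign_cell X x) S -> b \in S \/ - b \in S.
Proof.
wlog xb : b / 0 < dotp x b.
  move=> wlog_b bX; have := hx bX; case: (ltgtP (dotp x b) 0) => // xb _; last exact: wlog_b.
  rewrite -hypN => ct simS; have := wlog_b (- b) _ (root_opp rsX bX) ct simS.
  by rewrite opprK dotpNr oppr_gt0 => /(_ xb) [|]; [right|left].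
(* A generic point y of the common facet kills b, a nonnegative combination of S,
   hence kills a simple root in its support, which genericity forces to be +-b. *)
move=> bX ct simS; have [[SX _ _] pos] := simS.
have [y [Cy _ yb ygen]] := connected_through_generic rsX bX ct.
have yS s : s \in S -> 0 <= dotp y s by move=> /pos [_ /closure_dotp_ge0]; apply.
have [c [bc c_ge0]] := simple_comb_ge0 simS bX xb.
have terms0 i : c i * dotp y S`_i = 0.
  have sum0 : \sum_j c j * dotp y S`_j = 0.
    by rewrite -[RHS]yb bc dotp_sumr; apply: eq_bigr => j _; rewrite dotpZr.
  apply: (psumr_eq0P _ sum0) => // j _.
  by rewrite mulr_ge0 ?yS ?mem_nth.
have [i ci] : exists i, c i != 0.
  apply/existsP; move: (root_neq0 rsX bX); apply: contraNT => /existsPn c0.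
  by apply/eqP; rewrite bc big1 // => j _; rewrite (eqP (negbNE (c0 j))) scale0r.
have ySi : dotp y S`_i = 0 by move: (terms0 i) => /eqP; rewrite mulf_eq0 (negbTE ci) => /eqP.
have SiS : S`_i \in S := mem_nth 0 (ltn_ord i).
have [<-|Sib] := eqVneq S`_i b; first by left.
have [<-|SiNb] := eqVneq S`_i (- b); first by right.
by move: (ygen _ (SX _ SiS) Sib SiNb); rewrite ySi eqxx.
Qed.

Lemma wall_adjacent b C' : b \in X -> chamber X C' ->
  connected_through (sign_cell X x) C' (hyp b) ->
  C' = sign_cell X x \/ C' = refl b @^-1` sign_cell X x.
Proof.
(* Off +-b, the signs at x and x' are those at a generic point y of the common
   wall; the sign of b then decides between C and s_b C. *)
move=> bX /chamberP [x' hx' ->] ct; have b0 := root_neq0 rsX bX.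
have [y [Cy C'y yb ygen]] := connected_through_generic rsX bX ct.
have off a : a \in X -> a != b -> a != - b -> Num.sg (dotp x' a) = Num.sg (dotp x a).
  move=> aX ab aNb; have ya := ygen a aX ab aNb.
  by rewrite -(closure_sign_cell_sg hx' aX C'y ya) (closure_sign_cell_sg hx aX Cy ya).
case: (eqVneq (Num.sg (dotp x' b)) (Num.sg (dotp x b))) => [same|diff]; [left|right].
  apply: sign_cell_eq => a aX; have [->|ab] := eqVneq a b => //.
  have [->|aNb] := eqVneq a (- b); first by rewrite !dotpNr !sgrN same.
  exact: off.
have flip : Num.sg (dotp x' b) = Num.sg (dotp x (- b)).
  by rewrite dotpNr (sgr_opp_neq (hx' b bX) (hx bX) diff).
rewrite refl_sign_cell //; apply: sign_cell_eq => a aX; rewrite dotp_refl_adj //.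
have [->|ab] := eqVneq a b; first by rewrite refl_root.
have [->|aNb] := eqVneq a (- b).
  by rewrite reflN refl_root // opprK !dotpNr sgrN flip dotpNr sgrN opprK.
have raX := root_refl rsX bX aX; have ya := ygen a aX ab aNb.
have yra : dotp y (refl b a) = dotp y a by rewrite -dotp_refl_adj // refl_perp.
have yra0 : dotp y (refl b a) != 0 by rewrite yra.
by rewrite -(closure_sign_cell_sg hx raX Cy yra0) yra (closure_sign_cell_sg hx' aX C'y ya).
Qed.

Lemma closure_sign_cell_simple S z : is_simple_of X (sign_cell X x) S ->
  {in S, forall s, 0 <= dotp z s} -> closure (sign_cell X x) z.
Proof.
(* Positive roots are nonnegative combinations of S, hence nonnegative at z,
   so the segment from z to x lies in the cell, except perhaps at z. *)
move=> simS zS.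
have z_ge0 a : a \in X -> 0 < dotp x a -> 0 <= dotp z a.
  move=> aX xa; have [c [-> c_ge0]] := simple_comb_ge0 simS aX xa.
  by rewrite dotp_sumr sumr_ge0 // => i _; rewrite dotpZr mulr_ge0 ?zS ?mem_nth.
have seg_gt0 a (t : R) : a \in X -> 0 < dotp x a -> 0 < t <= 1 ->
    0 < dotp (z + t *: (x - z)) a.
  move=> aX xa /andP[t0 t1]; have := z_ge0 a aX xa.
  rewrite dotpDl dotpZl dotpBl; nra.
apply: (closure_segment (x := x)) => t t01 a aX.
have := hx aX; case: (ltgtP (dotp x a) 0) => // xa _.
  have := seg_gt0 _ t (root_opp rsX aX); rewrite !dotpNr !oppr_gt0 => /(_ xa t01) wa.
  by rewrite !ltr0_sg.
by rewrite (gtr0_sg xa) gtr0_sg //; apply: seg_gt0.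
Qed.

Lemma simple_wall_connected S g : is_simple_of X (sign_cell X x) S ->
  minimal_generators X x S -> g \in S ->
  connected_through (sign_cell X x) (refl g @^-1` sign_cell X x) (hyp g).
Proof.
move=> simS minS gS; have [_ SX xS _ _] := minS.
have g0 := root_neq0 rsX (SX _ gS); have gg0 := lt0r_neq0 (dotpp_gt0 g0).
(* U is where the simple roots other than g are positive: it contains the projection
   y0 of x on L_g by obtuseness, and U meets L_g inside both closures. *)
pose U := [set z | forall s, s \in [seq s <- S | s != g] -> 0 < dotp z s].
pose y0 := x - (dotp x g / dotp g g) *: g.
exists y0, U; split; first exact: open_dotp_gt0_seq.
- move=> s; rewrite mem_filter => /andP[sg sS].
  have gs : dotp g s <= 0 by apply: (minimal_generators_obtuse rsX hx minS); rewrite // eq_sym.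
  have k_ge0 : 0 <= dotp x g / dotp g g by rewrite divr_ge0 ?dotpp_ge0 // ltW // xS.
  have := xS _ sS; rewrite /y0 dotpBl dotpZl; nra.
- by rewrite /hyp /= /y0 dotpBl dotpZl; field.
move=> z [Uz zg]; have Cz : closure (sign_cell X x) z.
  apply: (closure_sign_cell_simple simS) => s sS; have [->|sg] := eqVneq s g.
    by rewrite zg.
  by apply/ltW/Uz; rewrite mem_filter sg.
split => //; split => //.
apply: closure_preimage_involution => //; first exact: refl_continuous.
  exact: reflK.
exact: refl_perp.
Qed.

End Walls.

Section LiftStep.
Variables (R : realType) (n : nat) (Phi Psi : seq 'rV[R]_n).
Hypotheses (rsPhi : root_system Phi) (subPsi : root_subsystem Phi Psi).

Lemma lifts_simple_gt0 x D S b : hcompl Phi x -> lifts Phi Psi (sign_cell Phi x) D ->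
  is_simple_of Psi D S -> b \in S -> 0 < dotp x b.
Proof.
move=> hx CD simS bS; have [SPhi [simPhi _]] := exists_simple_system rsPhi hx.
by have [_ /(_ x (@sign_cell_id _ _ Phi x))] := simPhi.2 _ (CD _ _ simPhi simS _ bS).
Qed.

Lemma lift_step C D D' b :
  chamber Phi C -> chamber Psi D -> chamber Psi D' -> b \in Psi ->
  connected_through D D' (hyp b) -> lifts Phi Psi C D ->
  exists! C', (chamber Phi C' /\ lifts Phi Psi C' D') /\ connected_through C C' (hyp b).
Proof.
have rsPsi := subsystem_root_system rsPhi subPsi; have [_ PsiPhi _] := subPsi.
move=> /chamberP [x hx ->] /chamberP [xd hxd ->] chD' bPsi ct CD.
have [SPsi [simPsi _]] := exists_simple_system rsPsi hxd.
wlog bS : b bPsi ct / b \in SPsi.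
  move=> wlog_b; case: (wall_simple_root rsPsi hxd bPsi ct simPsi); first exact: wlog_b.
  by rewrite -hypN in ct *; apply: wlog_b => //; exact: root_opp.
have bPhi := PsiPhi _ bPsi; have b0 := root_neq0 rsPhi bPhi.
have [SPhi [simPhi minPhi]] := exists_simple_system rsPhi hx.
have xb := lifts_simple_gt0 hx CD simPsi bS.
have not_lifts_reflC : ~ lifts Phi Psi (refl b @^-1` sign_cell Phi x) (sign_cell Psi xd).
  rewrite refl_sign_cell // => /(lifts_simple_gt0 (hcompl_refl rsPhi bPhi hx)).
  by move=> /(_ _ _ simPsi bS); rewrite dotp_refl_root // oppr_gt0 ltNge ltW.
have not_lifts_reflD : ~ lifts Phi Psi (sign_cell Phi x) (refl b @^-1` sign_cell Psi xd).
  have simRefl : is_simple_of Psi (refl b @^-1` sign_cell Psi xd) (map (refl b) SPsi).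
    by apply: (simple_system_refl rsPsi bPsi); rewrite preimage_reflK.
  have NbS : - b \in map (refl b) SPsi by rewrite -refl_root // map_f.
  move=> /(lifts_simple_gt0 hx) /(_ simRefl NbS).
  by rewrite dotpNr oppr_gt0 ltNge ltW.
have ct_refl := simple_wall_connected rsPhi hx simPhi minPhi (CD _ _ simPhi simPsi _ bS).
have adjC := wall_adjacent rsPhi hx bPhi.
case: (wall_adjacent rsPsi hxd bPsi chD' ct) => ->.
  exists (sign_cell Phi x); split.
    by split; [split => //; exact: chamber_sign_cell|exact: connected_through_same ct_refl].
  by move=> C'' [[chC'' C''D] /(adjC _ chC'') [|C''E]] //; rewrite C''E in C''D.
exists (refl b @^-1` sign_cell Phi x); split.
  split => //; split; first by apply: chamber_refl => //; exact: chamber_sign_cell.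
  exact: lifts_refl.
by move=> C'' [[chC'' C''D] /(adjC _ chC'') [C''E|]] //; rewrite C''E in C''D.
Qed.

End LiftStep.

Section PathLifting.
Variables (T : Type) (P : nat -> T -> Prop) (Q : nat -> T -> T -> Prop).

Definition is_path (m : nat) (Cs : nat -> T) :=
  (forall j, (j <= m)%N -> P j (Cs j)) /\ (forall j, (j < m)%N -> Q j.+1 (Cs j) (Cs j.+1)).

Definition unique_steps (m : nat) := forall j, (j < m)%N ->
  (forall C, P j C -> exists! C', P j.+1 C' /\ Q j.+1 C C') /\
  (forall C', P j.+1 C' -> exists! C, P j C /\ Q j.+1 C C').

Lemma unique_steps_pred m : unique_steps m.+1 -> unique_steps m.
Proof. by move=> steps j jm; apply: steps; exact: ltnW. Qed.

Lemma is_path_pred m Cs : is_path m.+1 Cs -> is_path m Cs.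
Proof. by move=> [PCs QCs]; split => j jm; [apply: PCs|apply: QCs]; exact: ltnW. Qed.

Lemma is_path_extend m Cs C' : is_path m Cs -> P m.+1 C' -> Q m.+1 (Cs m) C' ->
  is_path m.+1 (fun j => if (j <= m)%N then Cs j else C').
Proof.
move=> [PCs QCs] PC' QC'; split => j.
  move=> jm; case: leqP => [|mj]; first exact: PCs.
  by have -> : j = m.+1 by apply/eqP; rewrite eqn_leq jm mj.
move=> jm; have [->|jm'] := eqVneq j m; first by rewrite leqnn ltnn.
have {jm jm'} jm : (j < m)%N by rewrite ltn_neqAle jm' -ltnS.
by rewrite ltnW // jm; exact: QCs.
Qed.

Lemma exists_path m i C : unique_steps m -> (i <= m)%N -> P i C ->
  exists Cs, is_path m Cs /\ Cs i = C.
Proof.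
elim: m i C => [|m IH] i C steps im PC.
  move: im PC; rewrite leqn0 => /eqP -> PC; exists (fun=> C); split => //.
  by split => [[]|].
have [next_uniq prev_uniq] := steps m (ltnSn m).
case: (leqP i m) => [im'|]; last first.
  move=> mi; have {im mi} ei : i = m.+1 by apply/eqP; rewrite eqn_leq im mi.
  subst i.
  have [C0 [[PC0 QC0] _]] := prev_uniq C PC.
  have [Cs [pCs Csm]] := IH m C0 (unique_steps_pred steps) (leqnn m) PC0.
  exists (fun j => if (j <= m)%N then Cs j else C); split; last by rewrite ltnn.
  by apply: is_path_extend; rewrite ?Csm.
have [Cs [pCs Csi]] := IH i C (unique_steps_pred steps) im' PC.
have [C' [[PC' QC'] _]] := next_uniq _ (pCs.1 m (leqnn m)).
exists (fun j => if (j <= m)%N then Cs j else C'); split; first exact: is_path_extend.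
by rewrite im'.
Qed.

Lemma path_unique m i Cs Cs' : unique_steps m -> (i <= m)%N ->
  is_path m Cs -> is_path m Cs' -> Cs i = Cs' i -> forall j, (j <= m)%N -> Cs j = Cs' j.
Proof.
elim: m i => [|m IH] i steps im pCs pCs' CsCs' j.
  by rewrite leqn0 => /eqP ->; move: im CsCs'; rewrite leqn0 => /eqP ->.
have [next_uniq prev_uniq] := steps m (ltnSn m).
have agree_upto k : (k <= m)%N -> Cs k = Cs' k -> forall j, (j <= m)%N -> Cs j = Cs' j.
  by move=> km; apply: IH (unique_steps_pred steps) km (is_path_pred pCs) (is_path_pred pCs').
have [pCs_le pCs_step] := pCs; have [pCs'_le pCs'_step] := pCs'.
case: (leqP i m) => [im'|mi].
  have agree := agree_upto i im' CsCs'.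
  rewrite leq_eqVlt ltnS => /predU1P[->|]; last exact: agree.
  have [C' [_ uniq_next]] := next_uniq _ (pCs_le m (leqnSn m)).
  have <- := uniq_next _ (conj (pCs_le _ (leqnn _)) (pCs_step _ (ltnSn _))).
  apply: uniq_next; split; first exact: pCs'_le.
  by rewrite agree //; exact: pCs'_step.
have {im mi} ei : i = m.+1 by apply/eqP; rewrite eqn_leq im mi.
subst i.
have [C0 [_ uniq_prev]] := prev_uniq _ (pCs_le _ (leqnn m.+1)).
have agree_m : Cs m = Cs' m.
  have <- := uniq_prev _ (conj (pCs_le _ (leqnSn m)) (pCs_step _ (ltnSn m))).
  apply: uniq_prev; split; first exact: pCs'_le.
  by rewrite CsCs'; exact: pCs'_step.
by rewrite leq_eqVlt ltnS => /predU1P[->//|]; exact: agree_upto (leqnn m) agree_m j.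
Qed.

End PathLifting.

Section GalleryLifting.
Variables (R : realType) (n : nat) (Phi Psi : seq 'rV[R]_n).
Variables (m : nat) (Ds W : nat -> set 'rV[R]_n).

Definition lifting_chamber j (C : set 'rV[R]_n) := chamber Phi C /\ lifts Phi Psi C (Ds j).

Definition through_wall j (C C' : set 'rV[R]_n) := connected_through C C' (W j).

Hypotheses (rsPhi : root_system Phi) (subPsi : root_subsystem Phi Psi).
Hypothesis galDs : gallery Psi m Ds W.

Lemma lifting_galleryP Cs :
  is_path lifting_chamber through_wall m Cs <->
  gallery Phi m Cs W /\ lifts_gallery Phi Psi m Cs Ds.
Proof.
have [_ PsiPhi _] := subPsi.
split => [[pCs stepCs]|[[chCs stepCs] lCs]].
  split => [|j /pCs[]//]; split => [j /pCs[]//|[//|j] jm].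
  split; last exact: stepCs.
  by have [[a /PsiPhi aPhi ->] _] := galDs.2 j.+1 jm; exists a.
by split => [j jm|j jm]; [split; [exact: chCs|exact: lCs]|exact: (stepCs j.+1 jm).2].
Qed.

Lemma lifting_unique_steps : unique_steps lifting_chamber through_wall m.
Proof.
move=> j jm; rewrite /lifting_chamber /through_wall.
have [DsCh DsWall] := galDs; have [[b bPsi ->] ct] := DsWall j.+1 jm.
have chDj := DsCh j (ltnW jm); have chDj1 := DsCh j.+1 jm.
split => [C [chC CD]|C' [chC' C'D]].
  exact (lift_step rsPhi subPsi chC chDj chDj1 bPsi ct CD).
have [C [[PC ctC] uniqC]] := lift_step rsPhi subPsi chC' chDj1 chDj bPsi
  (connected_through_sym ct) C'D.
exists C; split; first by split => //; exact: connected_through_sym.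
by move=> C0 [PC0 ct0]; apply: uniqC; split => //; exact: connected_through_sym.
Qed.

End GalleryLifting.

Theorem theorem2 (R : realType) (n : nat) (Phi Psi : seq 'rV[R]_n)
  (m : nat) (Ds : nat -> set 'rV[R]_n) (W : nat -> set 'rV[R]_n)
  (i : nat) (C : set 'rV[R]_n) :
  root_system Phi -> root_subsystem Phi Psi ->
  gallery Psi m Ds W -> (i <= m)%N ->
  chamber Phi C -> lifts Phi Psi C (Ds i) ->
  exists Cs : nat -> set 'rV[R]_n,
    [/\ gallery Phi m Cs W, lifts_gallery Phi Psi m Cs Ds, Cs i = C &
        forall Cs' : nat -> set 'rV[R]_n,
          gallery Phi m Cs' W -> lifts_gallery Phi Psi m Cs' Ds -> Cs' i = C ->
          forall j, (j <= m)%N -> Cs' j = Cs j].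
Proof.
move=> rsPhi subPsi galDs im chC CDi.
have steps := lifting_unique_steps rsPhi subPsi galDs.
have [Cs [/(lifting_galleryP subPsi galDs) [galCs liftCs] Csi]] :=
  exists_path steps im (conj chC CDi).
exists Cs; split => // Cs' galCs' liftCs' Cs'i.
by apply: (path_unique steps im); rewrite ?Csi //; apply/(lifting_galleryP subPsi galDs).
Qed.
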